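(* Let $\pi:(X,T)\to(Y,S)$ be a proximal extension of minimal topological dynamical systems. If $(Y,S)$ is not strongly $\mathcal{F}_t$-sensitive, then neither is $(X,T)$.
   Context: A topological dynamical system: compact metric space with continuous surjection; minimal means every orbit is dense. A proximal extension is a factor map $\pi$ ($\pi\circ T=S\circ\pi$, continuous surjective) such that every pair $(x,y)$ with $\pi(x)=\pi(y)$ is proximal, i.e. $\inf_n d(T^nx,T^ny)=0$. A set $F\subset\mathbb{Z}_+$ is thick if it contains arbitrarily long blocks of consecutive integers. A system $(X,T)$ is strongly $\mathcal{F}_t$-sensitive if there is $\delta>0$ such that for each nonempty open $U$ there are $x,y\in U$ with $\{n\in\mathbb{Z}_+:d(T^nx,T^ny)>\delta\}$ thick. *)

From Stdlib Require Import Reals Lra Lia.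
Open Scope R_scope.

Record is_metric {X : Type} (d : X -> X -> R) : Prop := {
  metric_nonneg : forall x y, 0 <= d x y;
  metric_eq0 : forall x y, d x y = 0 <-> x = y;
  metric_sym : forall x y, d x y = d y x;
  metric_tri : forall x y z, d x z <= d x y + d y z
}.

Definition mopen {X : Type} (d : X -> X -> R) (U : X -> Prop) : Prop :=
  forall x, U x -> exists eps, 0 < eps /\ forall y, d x y < eps -> U y.

Definition mcompact {X : Type} (d : X -> X -> R) : Prop :=
  forall (I : Type) (U : I -> X -> Prop),
    (forall i, mopen d (U i)) -> (forall x, exists i, U i x) ->
    exists l : list I, forall x, exists i, List.In i l /\ U i x.

Definition mcontinuous {X Y : Type} (dX : X -> X -> R) (dY : Y -> Y -> R)
  (f : X -> Y) : Prop :=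
  forall x eps, 0 < eps -> exists delta, 0 < delta /\
    forall y, dX x y < delta -> dY (f x) (f y) < eps.

Definition surjective {X Y : Type} (f : X -> Y) : Prop :=
  forall y, exists x, f x = y.

Definition TDS {X : Type} (d : X -> X -> R) (T : X -> X) : Prop :=
  is_metric d /\ mcompact d /\ mcontinuous d d T /\ surjective T.

Definition minimal {X : Type} (d : X -> X -> R) (T : X -> X) : Prop :=
  forall x y eps, 0 < eps -> exists n : nat, d (Nat.iter n T x) y < eps.

Definition factor_map {X Y : Type} (dX : X -> X -> R) (T : X -> X)
  (dY : Y -> Y -> R) (S : Y -> Y) (pi : X -> Y) : Prop :=
  mcontinuous dX dY pi /\ surjective pi /\ (forall x, pi (T x) = S (pi x)).

Definition proximal {X : Type} (d : X -> X -> R) (T : X -> X) (x y : X) : Prop :=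
  forall eps, 0 < eps -> exists n : nat,
    d (Nat.iter n T x) (Nat.iter n T y) < eps.

Definition proximal_extension {X Y : Type} (dX : X -> X -> R) (T : X -> X)
  (dY : Y -> Y -> R) (S : Y -> Y) (pi : X -> Y) : Prop :=
  factor_map dX T dY S pi /\
  forall x y, pi x = pi y -> proximal dX T x y.

Definition thick (F : nat -> Prop) : Prop :=
  forall L : nat, exists a : nat, forall i, (i < L)%nat -> F (a + i)%nat.

Definition strongly_Ft_sensitive {X : Type} (d : X -> X -> R) (T : X -> X) : Prop :=
  exists delta, 0 < delta /\
    forall U : X -> Prop, mopen d U -> (exists u, U u) ->
      exists x y, U x /\ U y /\
        thick (fun n => d (Nat.iter n T x) (Nat.iter n T y) > delta).

(* A strongly F_t-sensitive constant delta of X descends to Y.  The key point is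
   a uniform bound: there are eps > 0 and M such that any pair staying more
   than delta apart along an orbit block of length M has images at least eps
   apart in Y.  Otherwise, by compactness, a cluster point (p, q) of pairs
   separated along ever longer blocks, with images ever closer, would satisfy
   pi p = pi q while d(T^n p, T^n q) >= delta for every n, contradicting
   proximality of the fibres.  Pulling back an open set of Y, taking a pair
   given by the sensitivity of X and projecting it then shows that Y is
   strongly F_t-sensitive with constant eps / 2. *)
From Stdlib Require Import Reals.
From Stdlib Require Import Lra Lia ClassicalEpsilon Classical List.
Open Scope R_scope.

Lemma iter_factor {X Y : Type} (T : X -> X) (S : Y -> Y) (pi : X -> Y) :
  (forall x, pi (T x) = S (pi x)) ->
  forall n x, pi (Nat.iter n T x) = Nat.iter n S (pi x).
Proof.
  intros Hcomm n; induction n as [|n IH]; intros x; simpl; auto.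
  rewrite Hcomm, IH; reflexivity.
Qed.

Lemma mcontinuous_iter {X : Type} (d : X -> X -> R) (T : X -> X) :
  mcontinuous d d T -> forall n, mcontinuous d d (Nat.iter n T).
Proof.
  intros HT n; induction n as [|n IH]; intros x eps Heps; simpl.
  - exists eps; split; auto.
  - destruct (HT (Nat.iter n T x) eps Heps) as [e [He Hc]].
    destruct (IH x e He) as [e' [He' Hc']].
    exists e'; split; auto.
Qed.

Lemma mopen_preimage {X Y : Type} (dX : X -> X -> R) (dY : Y -> Y -> R)
  (f : X -> Y) (V : Y -> Prop) :
  mcontinuous dX dY f -> mopen dY V -> mopen dX (fun x => V (f x)).
Proof.
  intros Hf HV x Hx. destruct (HV _ Hx) as [e [He HVe]].
  destruct (Hf x e He) as [eta [Heta Hc]].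
  exists eta; split; auto.
Qed.

Section Metric.

Context {X : Type} (d : X -> X -> R) (Hm : is_metric d).

Lemma metric_refl x : d x x = 0.
Proof. apply (proj2 (metric_eq0 d Hm x x)); reflexivity. Qed.

Lemma metric_tri4 x y z w : d x w <= d y x + d y z + d z w.
Proof.
  rewrite (metric_sym d Hm y x).
  pose proof (metric_tri d Hm x y w). pose proof (metric_tri d Hm y z w). lra.
Qed.

End Metric.

Lemma inv_INR_succ_pos (k : nat) : 0 < / (INR k + 1).
Proof. apply Rinv_0_lt_compat. pose proof (pos_INR k); lra. Qed.

Lemma inv_INR_succ_le (k N : nat) : (N <= k)%nat -> / (INR k + 1) <= / (INR N + 1).
Proof.
  intro H. apply Rinv_le_contravar. pose proof (pos_INR N); lra.
  apply le_INR in H; lra.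
Qed.

Lemma inv_INR_succ_lt (e : R) : 0 < e -> exists N : nat, / (INR N + 1) < e.
Proof.
  intro He. destruct (archimed_cor1 e He) as [N [HN HN0]].
  exists N. assert (0 < INR N) by (apply lt_0_INR; lia).
  apply Rle_lt_trans with (/ INR N); auto.
  apply Rinv_le_contravar; lra.
Qed.

Definition cluster_point {X : Type} (d : X -> X -> R) (x : nat -> X) (p : X) : Prop :=
  forall r, 0 < r -> forall N, exists j, (N <= j)%nat /\ d (x j) p < r.

Definition cluster_pair {X : Type} (d : X -> X -> R) (a b : nat -> X) (p q : X) : Prop :=
  forall r, 0 < r -> forall N, exists j, (N <= j)%nat /\ d (a j) p < r /\ d (b j) q < r.

Section Compact.

Context {X : Type} (d : X -> X -> R) (Hm : is_metric d) (Hc : mcompact d).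

(* If no point is a cluster point, the balls witnessing this cover X; a finite
   subcover is then missed by x at any index beyond all their thresholds. *)
Lemma mcompact_cluster_point (x : nat -> X) : exists p, cluster_point d x p.
Proof.
  apply NNPP; intro Hn.
  assert (Hfar : forall p, exists r N, 0 < r /\ forall j, (N <= j)%nat -> r <= d (x j) p).
  { intro p. apply NNPP; intro H1. apply Hn. exists p. intros r Hr N.
    apply NNPP; intro H2. apply H1. exists r, N. split; auto.
    intros j Hj. apply Rnot_lt_le. intro H3. apply H2. exists j; auto. }
  pose (I := {p : X & {r : R & {N : nat | 0 < r /\ forall j, (N <= j)%nat -> r <= d (x j) p}}}).
  pose (U := fun (i : I) (y : X) => d (projT1 i) y < projT1 (projT2 i)).
  destruct (Hc I U) as [l Hl].
  - intros [p [r [N [Hr HN]]]] y Hy. unfold U in *; simpl in *.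
    exists (r - d p y); split; [lra|]. intros z Hz.
    pose proof (metric_tri d Hm p y z). lra.
  - intro y. destruct (Hfar y) as [r [N [Hr HN]]].
    exists (existT _ y (existT _ r (exist _ N (conj Hr HN)))).
    unfold U; simpl. rewrite metric_refl; auto.
  - pose (threshold := fun i : I => proj1_sig (projT2 (projT2 i))).
    destruct (Hl (x (list_max (map threshold l)))) as [i [Hi Hu]].
    assert (Hle : (threshold i <= list_max (map threshold l))%nat).
    { pose proof (proj1 (list_max_le _ _) (le_n (list_max (map threshold l)))) as Hall.
      rewrite Forall_forall in Hall. apply Hall, in_map, Hi. }
    destruct i as [p [r [N [Hr HN]]]]. unfold U, threshold in *; simpl in *.
    pose proof (HN _ Hle) as HN'. rewrite (metric_sym d Hm) in HN'. lra.
Qed.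

Lemma mcompact_cluster_pair (a b : nat -> X) : exists p q, cluster_pair d a b p q.
Proof.
  destruct (mcompact_cluster_point a) as [p Hp].
  assert (Hsub : forall k, exists j, (k <= j)%nat /\ d (a j) p < / (INR k + 1)).
  { intro k. apply Hp, inv_INR_succ_pos. }
  destruct (choice _ Hsub) as [s Hs].
  destruct (mcompact_cluster_point (fun k => b (s k))) as [q Hq].
  exists p, q. intros r Hr N.
  destruct (inv_INR_succ_lt r Hr) as [N1 HN1].
  destruct (Hq r Hr (Nat.max N N1)) as [k [Hk Hbk]].
  destruct (Hs k) as [Hks Hak].
  pose proof (inv_INR_succ_le k N1 ltac:(lia)).
  exists (s k). repeat split; [lia | lra | exact Hbk].
Qed.

End Compact.

Lemma cluster_pair_factor_eq {X Y : Type} (dX : X -> X -> R) (dY : Y -> Y -> R)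
  (pi : X -> Y) (a b : nat -> X) (p q : X) :
  is_metric dX -> is_metric dY -> mcontinuous dX dY pi ->
  (forall j, dY (pi (a j)) (pi (b j)) < / (INR j + 1)) ->
  cluster_pair dX a b p q -> pi p = pi q.
Proof.
  intros HmX HmY Hpi Hab Hpq.
  apply (proj1 (metric_eq0 dY HmY _ _)).
  pose proof (metric_nonneg dY HmY (pi p) (pi q)).
  apply NNPP; intro Hne. set (D := dY (pi p) (pi q)) in *.
  assert (HD : 0 < D / 3) by lra.
  destruct (Hpi p _ HD) as [e1 [He1 Hc1]].
  destruct (Hpi q _ HD) as [e2 [He2 Hc2]].
  destruct (inv_INR_succ_lt (D / 3) HD) as [N HN].
  destruct (Hpq (Rmin e1 e2) (Rmin_pos _ _ He1 He2) N) as [j [Hj [Haj Hbj]]].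
  pose proof (Rmin_l e1 e2). pose proof (Rmin_r e1 e2).
  assert (Hp' : dY (pi (a j)) (pi p) < D / 3).
  { rewrite (metric_sym dY HmY). apply Hc1. rewrite (metric_sym dX HmX). lra. }
  assert (Hq' : dY (pi (b j)) (pi q) < D / 3).
  { rewrite (metric_sym dY HmY). apply Hc2. rewrite (metric_sym dX HmX). lra. }
  pose proof (Hab j). pose proof (inv_INR_succ_le j N Hj).
  pose proof (metric_tri4 dY HmY (pi p) (pi (a j)) (pi (b j)) (pi q)).
  unfold D in *. lra.
Qed.

Lemma cluster_pair_separated {X : Type} (d : X -> X -> R) (T : X -> X)
  (a b : nat -> X) (p q : X) (delta : R) :
  is_metric d -> mcontinuous d d T ->
  (forall j n, (n < j)%nat -> d (Nat.iter n T (a j)) (Nat.iter n T (b j)) > delta) ->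
  cluster_pair d a b p q ->
  forall n, delta <= d (Nat.iter n T p) (Nat.iter n T q).
Proof.
  intros Hm HT Hsep Hpq n. apply Rnot_lt_le; intro Hlt.
  set (D := d (Nat.iter n T p) (Nat.iter n T q)) in *.
  assert (He : 0 < (delta - D) / 2) by lra.
  destruct (mcontinuous_iter d T HT n p _ He) as [e1 [He1 Hc1]].
  destruct (mcontinuous_iter d T HT n q _ He) as [e2 [He2 Hc2]].
  destruct (Hpq (Rmin e1 e2) (Rmin_pos _ _ He1 He2) (S n)) as [j [Hj [Haj Hbj]]].
  pose proof (Rmin_l e1 e2). pose proof (Rmin_r e1 e2).
  assert (Hp' : d (Nat.iter n T p) (Nat.iter n T (a j)) < (delta - D) / 2).
  { apply Hc1. rewrite (metric_sym d Hm). lra. }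
  assert (Hq' : d (Nat.iter n T q) (Nat.iter n T (b j)) < (delta - D) / 2).
  { apply Hc2. rewrite (metric_sym d Hm). lra. }
  pose proof (Hsep j n ltac:(lia)).
  pose proof (metric_tri4 d Hm (Nat.iter n T (a j)) (Nat.iter n T p)
                (Nat.iter n T q) (Nat.iter n T (b j))).
  unfold D in *. lra.
Qed.

Lemma proximal_extension_separation_bound (X Y : Type) (dX : X -> X -> R)
  (T : X -> X) (dY : Y -> Y -> R) (S : Y -> Y) (pi : X -> Y) :
  TDS dX T -> TDS dY S -> proximal_extension dX T dY S pi ->
  forall delta, 0 < delta ->
  exists eps M, 0 < eps /\ forall a b,
    (forall n, (n < M)%nat -> dX (Nat.iter n T a) (Nat.iter n T b) > delta) ->
    eps <= dY (pi a) (pi b).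
Proof.
  intros [HmX [HcX [HT _]]] [HmY _] [[Hpi _] Hprox] delta Hdelta.
  apply NNPP; intro Hn.
  assert (Hbad : forall j : nat, exists ab : X * X,
    (forall n, (n < j)%nat -> dX (Nat.iter n T (fst ab)) (Nat.iter n T (snd ab)) > delta)
    /\ dY (pi (fst ab)) (pi (snd ab)) < / (INR j + 1)).
  { intro j. apply NNPP; intro H1. apply Hn. exists (/ (INR j + 1)), j.
    split; [apply inv_INR_succ_pos|]. intros a b Hab. apply Rnot_lt_le; intro H2.
    apply H1. exists (a, b). auto. }
  destruct (choice _ Hbad) as [f Hf].
  destruct (mcompact_cluster_pair dX HmX HcX (fun j => fst (f j)) (fun j => snd (f j)))
    as [p [q Hpq]].
  assert (Hfib : pi p = pi q).
  { apply (cluster_pair_factor_eq dX dY pi (fun j => fst (f j)) (fun j => snd (f j)));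
      auto.
    intro j; apply Hf. }
  assert (Hfar : forall n, delta <= dX (Nat.iter n T p) (Nat.iter n T q)).
  { apply (cluster_pair_separated dX T (fun j => fst (f j)) (fun j => snd (f j)));
      auto.
    intros j; apply Hf. }
  destruct (Hprox p q Hfib delta Hdelta) as [n Hn'].
  specialize (Hfar n). lra.
Qed.

Lemma thick_blocks (F : nat -> Prop) (M : nat) :
  thick F -> thick (fun n => forall i, (i < M)%nat -> F (n + i)%nat).
Proof.
  intros HF L. destruct (HF (L + M)%nat) as [a Ha]. exists a.
  intros i Hi k Hk. replace (a + i + k)%nat with (a + (i + k))%nat by lia.
  apply Ha. lia.
Qed.

Lemma strongly_Ft_sensitive_factor (X Y : Type) (dX : X -> X -> R) (T : X -> X)
  (dY : Y -> Y -> R) (S : Y -> Y) (pi : X -> Y) (delta eps : R) (M : nat) :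
  factor_map dX T dY S pi -> 0 < eps ->
  (forall a b,
    (forall n, (n < M)%nat -> dX (Nat.iter n T a) (Nat.iter n T b) > delta) ->
    eps <= dY (pi a) (pi b)) ->
  (forall U : X -> Prop, mopen dX U -> (exists u, U u) ->
    exists x y, U x /\ U y /\
      thick (fun n => dX (Nat.iter n T x) (Nat.iter n T y) > delta)) ->
  strongly_Ft_sensitive dY S.
Proof.
  intros [Hpi [Hsurj Hcomm]] Heps Hbound HsensX.
  exists (eps / 2). split; [lra|]. intros V HV [v Hv].
  destruct (HsensX (fun x => V (pi x))) as [x1 [x2 [H1 [H2 Hthick]]]].
  - exact (mopen_preimage dX dY pi V Hpi HV).
  - destruct (Hsurj v) as [x Hx]. exists x. rewrite Hx; auto.
  - exists (pi x1), (pi x2). repeat split; auto.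
    intro L. destruct (thick_blocks _ M Hthick L) as [a Ha]. exists a.
    intros i Hi. rewrite <- !(iter_factor T S pi Hcomm).
    enough (eps <= dY (pi (Nat.iter (a + i) T x1)) (pi (Nat.iter (a + i) T x2)))
      by lra.
    apply Hbound. intros n Hn. rewrite <- !Nat.iter_add, (Nat.add_comm n).
    apply Ha; assumption.
Qed.

Theorem proposition5p1 (X Y : Type) (dX : X -> X -> R) (T : X -> X)
  (dY : Y -> Y -> R) (S : Y -> Y) (pi : X -> Y) :
  TDS dX T -> minimal dX T ->
  TDS dY S -> minimal dY S ->
  proximal_extension dX T dY S pi ->
  ~ strongly_Ft_sensitive dY S ->
  ~ strongly_Ft_sensitive dX T.
Proof.
  intros HX _ HY _ Hext HnotY [delta [Hdelta HsensX]].
  destruct (proximal_extension_separation_bound X Y dX T dY S pi HX HY Hext delta Hdelta)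
    as [eps [M [Heps Hbound]]].
  destruct Hext as [Hfactor _].
  exact (HnotY (strongly_Ft_sensitive_factor X Y dX T dY S pi delta eps M
                  Hfactor Heps Hbound HsensX)).
Qed.
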